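(* Every partition $F\subseteq S^d$ that is a $k$-neighborly family for some $k\leqslant 2$ is a total lamination.
   Context: Let $S=\{0,1,\ast\}$ and let $S^d$ be the set of strings of length $d$ over $S$; the symbol $\ast$ is called a joker, and $j(x)$ denotes the number of jokers in $x\in S^d$. For $x,y\in S^d$, $d(x,y)$ is the number of positions $i\in[d]$ such that one of $x_i,y_i$ equals $0$ and the other equals $1$. A family $F\subseteq S^d$ is $k$-neighborly if $1\leqslant d(x,y)\leqslant k$ for all distinct $x,y\in F$. A $k$-neighborly family $F$ is a partition if $\sum_{x\in F}2^{j(x)}=2^d$. For $s\in S$ and $i\in[d]$, $F^{i,s}$ denotes the set of strings in $F$ having symbol $s$ at position $i$. A family $F\subseteq S^d$ is a lamination if it is a partition and $F=F^{i,0}\cup F^{i,1}$ for some $i\in[d]$. For $v\in S^d$ and $i\in[d]$, $v_{-i}$ is the string of length $d-1$ obtained by deleting the $i$-th letter of $v$, and $F_{-i}=\{v_{-i}:v\in F\}$. Total laminations are defined recursively on $d$: for every $d\geqslant 1$, the one-element family $\{\ast\ast\cdots\ast\}\subseteq S^d$ and the full cube $\{0,1\}^d\subseteq S^d$ are total laminations; and a lamination $F\subseteq S^d$ is a total lamination if there is $i\in[d]$ with $F=F^{i,0}\cup F^{i,1}$ such that both $(F^{i,0})_{-i}$ and $(F^{i,1})_{-i}$ are total laminations (in $S^{d-1}$). *)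

From mathcomp Require Import all_boot.
Set Implicit Arguments. Unset Strict Implicit. Unset Printing Implicit Defensive.

(* Alphabet S = {0,1,*} encoded as option bool:
   Some false = 0, Some true = 1, None = joker *. *)
Definition sym := option bool.
Definition s0 : sym := Some false.
Definition s1 : sym := Some true.
Definition joker : sym := None.

Definition word (d : nat) := {ffun 'I_d -> sym}.

Definition jokers d (x : word d) : nat := #|[set i | x i == joker]|.

Definition wdist d (x y : word d) : nat :=
  #|[set i | ((x i == s0) && (y i == s1)) || ((x i == s1) && (y i == s0))]|.

Definition neighborly d (k : nat) (F : {set word d}) : Prop :=
  forall x y, x \in F -> y \in F -> x != y -> 1 <= wdist x y <= k.

Definition is_partition d (F : {set word d}) : Prop :=
  (exists k, neighborly k F) /\ \sum_(x in F) 2 ^ jokers x = 2 ^ d.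

Definition fam_at d (F : {set word d}) (i : 'I_d) (s : sym) : {set word d} :=
  [set x in F | x i == s].

Definition del_letter d (i : 'I_d.+1) (v : word d.+1) : word d :=
  [ffun j => v (lift i j)].

Definition del_fam d (i : 'I_d.+1) (F : {set word d.+1}) : {set word d} :=
  [set del_letter i v | v in F].

Definition lamination_at d (F : {set word d}) (i : 'I_d) : Prop :=
  is_partition F /\ F = fam_at F i s0 :|: fam_at F i s1.

Definition all_joker d : word d := [ffun _ => joker].
Definition full_cube d : {set word d} := [set x : word d | [forall i, x i != joker]].

Inductive total_lamination : forall d : nat, {set word d} -> Prop :=
| TL_joker d : 1 <= d -> total_lamination [set all_joker d]
| TL_cube d : 1 <= d -> total_lamination (full_cube d)
| TL_split d (F : {set word d.+2}) (i : 'I_d.+2) :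
    lamination_at F i ->
    total_lamination (del_fam i (fam_at F i s0)) ->
    total_lamination (del_fam i (fam_at F i s1)) ->
    total_lamination F.

From mathcomp Require Import all_boot all_algebra zify.
Set Implicit Arguments. Unset Strict Implicit. Unset Printing Implicit Defensive.
Import GRing.Theory Num.Theory.

(** Fix a 2-neighborly partition F with at least two words, let x be
    a word of F with the most non-joker letters and S its set of non-joker
    positions.  Summing the character p |-> (-1)^(sum_(i in S) p_i) over the cube
    {0,1}^d gives 0, and grouping the sum by the subcube of F containing p, a word
    whose non-joker positions do not contain S contributes 0 while one whose
    non-joker positions contain S (hence equal S, by maximality) contributes
    +-2^(jokers).  So some y in F has the same non-joker positions as x and the
    opposite sign, i.e. d(x,y) is odd, hence 1: x and y differ in a single letter
    i.  Merging them into one word with a joker at i yields a smaller 2-neighborly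
    partition; by induction on |F| it has a coordinate m <> i where no word has a
    joker, and then so does F.  Splitting F along m gives two 2-neighborly
    partitions of dimension d-1, and induction on d yields a total lamination. *)

Definition vertex d := {ffun 'I_d -> bool}.

Definition covers d (w : word d) (p : vertex d) : bool :=
  [forall i, (w i == joker) || (w i == Some (p i))].

Definition covered d (F : {set word d}) (p : vertex d) : bool :=
  [exists w in F, covers w p].

Definition covering d (F : {set word d}) : Prop := forall p, covered F p.

Definition separated d (F : {set word d}) : Prop :=
  forall x y, x \in F -> y \in F -> x != y -> 0 < wdist x y.

Definition support d (w : word d) : {set 'I_d} := [set i | w i != joker].

Definition vertex_of d (w : word d) : vertex d := [ffun i => w i == s1].

Definition clash d (x y : word d) (i : 'I_d) : bool :=
  ((x i == s0) && (y i == s1)) || ((x i == s1) && (y i == s0)).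

Section Words.

Variable d : nat.
Implicit Types (x y w : word d) (p : vertex d) (F : {set word d}).

Lemma wdistE x y : wdist x y = #|[set i | clash x y i]|.
Proof. by []. Qed.

Lemma clashC x y i : clash x y i = clash y x i.
Proof. by rewrite /clash; case: (x i) => [[]|]; case: (y i) => [[]|]. Qed.

Lemma clashxx x i : ~~ clash x x i.
Proof. by rewrite /clash; case: (x i) => [[]|]. Qed.

Lemma wdistC x y : wdist x y = wdist y x.
Proof. by rewrite !wdistE; apply: eq_card => i; rewrite !inE clashC. Qed.

Lemma wdist_gt0P x y : reflect (exists i, clash x y i) (0 < wdist x y).
Proof.
rewrite wdistE; apply: (iffP card_gt0P) => -[i].
  by rewrite inE; exists i.
by exists i; rewrite inE.
Qed.

Lemma clash_common x y w i : clash x w i -> clash y w i -> ~~ clash x y i.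
Proof. by rewrite /clash; case: (x i) => [[]|]; case: (y i) => [[]|]; case: (w i) => [[]|]. Qed.

Lemma clash_support x y i : clash x y i -> i \in support x.
Proof. by rewrite inE /clash; case: (x i) => [[]|]. Qed.

Lemma neighborly_separated k F : neighborly k F -> separated F.
Proof. by move=> Fnb x y xF yF xy; case/andP: (Fnb x y xF yF xy). Qed.

Lemma neighborly_leq k k' F : k <= k' -> neighborly k F -> neighborly k' F.
Proof.
move=> kk' Fnb x y xF yF xy; case/andP: (Fnb x y xF yF xy) => -> /= le_xy_k.
exact: leq_trans kk'.
Qed.

Lemma card_vertex : #|[set: vertex d]| = 2 ^ d.
Proof. by rewrite cardsT card_ffun card_bool card_ord. Qed.

Lemma card_covers w : #|[set p | covers w p]| = 2 ^ jokers w.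
Proof.
pose A i : pred bool := if w i is Some b then pred1 b else predT.
have -> : #|[set p | covers w p]| = #|(family A : simpl_pred (vertex d))|.
  apply: eq_card => p; rewrite inE; apply/forallP/familyP => cwp i; move: (cwp i);
  by rewrite /A; case: (w i) => [b|] //=; rewrite inE => /eqP[->].
rewrite card_family foldrE big_map big_enum /= /jokers (bigID (fun i => w i == joker)) /=.
rewrite [X in _ * X]big1 ?muln1 => [|i]; last by rewrite /A; case: (w i) => // b _; rewrite card1.
rewrite (eq_bigr (fun => 2)) => [|i /eqP wi]; last by rewrite /A wi card_bool.
by rewrite prod_nat_const cardsE.
Qed.

Lemma separated_covers F x y p : separated F -> x \in F -> y \in F ->
  covers x p -> covers y p -> x = y.
Proof.
move=> Fsep xF yF /forallP cxp /forallP cyp; apply/eqP/negPn/negP => xy.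
have /wdist_gt0P[i] := Fsep x y xF yF xy.
by move: (cxp i) (cyp i); rewrite /clash; case: (x i) => [[]|]; case: (y i) => [[]|]; case: (p i).
Qed.

Lemma sum_covered (R : nmodType) F (f : vertex d -> R) : separated F ->
  (\sum_(p | covered F p) f p = \sum_(w in F) \sum_(p | covers w p) f p)%R.
Proof.
move=> Fsep; rewrite (exchange_big_dep (covered F)) => [|w p wF cwp]; last first.
  by apply/exists_inP; exists w.
apply: eq_bigr => p /exists_inP[w wF cwp].
rewrite (bigD1 w) ?wF //= big1 ?addr0 // => v /andP[/andP[vF cvp] vw].
by rewrite (separated_covers Fsep vF wF cvp cwp) eqxx in vw.
Qed.

Lemma card_covered F : separated F ->
  #|[set p | covered F p]| = \sum_(w in F) 2 ^ jokers w.
Proof.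
move=> Fsep; rewrite -sum1_card (eq_bigl (covered F)) => [|p]; last by rewrite inE.
rewrite sum_covered //; apply: eq_bigr => w _.
by rewrite -card_covers -sum1_card; apply: eq_bigl => p; rewrite inE.
Qed.

Lemma partition_covering F : separated F ->
  \sum_(w in F) 2 ^ jokers w = 2 ^ d <-> covering F.
Proof.
move=> Fsep; rewrite -card_covered // -card_vertex; split => [Fcard p | Fcov].
  have : [set p | covered F p] = [set: vertex d].
    by apply/eqP; rewrite eqEcard subsetT Fcard leqnn.
  by move/setP/(_ p); rewrite !inE.
by apply: eq_card => p; rewrite !inE Fcov.
Qed.

Lemma covering_singleton F : covering F -> #|F| <= 1 -> F = [set all_joker d].
Proof.
move=> Fcov F1; have [w Fw] : exists w, F = [set w].
  have /exists_inP[w wF _] := Fcov [ffun=> true].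
  by apply/cards1P; rewrite eqn_leq F1 card_gt0; apply/set0Pn; exists w.
rewrite Fw; congr [set _]; apply/ffunP => i; rewrite ffunE.
case wi: (w i) => [b|] //.
have /exists_inP[v] := Fcov [ffun=> ~~ b]; rewrite Fw inE => /eqP -> /forallP/(_ i).
by rewrite wi ffunE; case: b {wi}.
Qed.

Lemma covering_full_cube F : covering F ->
  (forall w, w \in F -> forall i, w i != joker) -> F = full_cube d.
Proof.
move=> Fcov Fbits; apply/setP => w; rewrite inE.
apply/idP/forallP => [wF | wbits]; first exact: Fbits.
have /exists_inP[v vF /forallP cvw] := Fcov (vertex_of w).
suff -> : w = v by [].
apply/ffunP => i; move: (cvw i) (Fbits v vF i) (wbits i); rewrite ffunE.
by case: (v i) => [b|] //= /eqP[->]; case: (w i) => [[]|].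
Qed.

End Words.

Definition flip d (k : 'I_d) (p : vertex d) : vertex d := [ffun i => (i == k) (+) p i].

Definition sign d (S : {set 'I_d}) (p : vertex d) : int := (\prod_(i in S) (-1) ^+ p i)%R.

Section Signs.

Local Open Scope ring_scope.

Variables (d : nat) (S : {set 'I_d}).
Implicit Types (w : word d) (p q : vertex d).

Lemma flipK k : involutive (@flip d k).
Proof. by move=> p; apply/ffunP => i; rewrite !ffunE addbA addbb. Qed.

Lemma sign_flip k p : k \in S -> sign S (flip k p) = - sign S p.
Proof.
move=> kS; rewrite /sign !(bigD1 k kS) /= ffunE eqxx signr_addb mulN1r -mulNr.
by congr (_ * _); apply: eq_bigr => i /andP[_ /negbTE ik]; rewrite ffunE ik.
Qed.

Lemma sign_mul p q : sign S p * sign S q = (-1) ^+ #|[set i in S | p i != q i]|.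
Proof.
rewrite /sign -big_split -prodr_const /= [LHS]big_mkcond [RHS]big_mkcond /=.
by apply: eq_bigr => i _; rewrite inE; case: (i \in S) (p i) (q i) => [[] []|].
Qed.

Lemma sign_sq p : sign S p * sign S p = 1.
Proof.
rewrite sign_mul (_ : [set i in S | p i != p i] = set0) ?cards0 //.
by apply/setP => i; rewrite !inE eqxx andbF.
Qed.

Lemma sign_neq0 p : sign S p != 0.
Proof. by apply/prodf_neq0 => i _; rewrite signr_eq0. Qed.

Lemma sum_sign_flip_invariant k (P : pred (vertex d)) :
  k \in S -> (forall p, P (flip k p) = P p) -> \sum_(p | P p) sign S p = 0.
Proof.
move=> kS Pflip; set s := \sum_(p | P p) sign S p.
have : s = - s.
  rewrite {1}/s (reindex_inj (can_inj (flipK k))) /= -sumrN.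
  by apply: eq_big => [p | p _]; rewrite ?Pflip ?sign_flip.
lia.
Qed.

Lemma sign_covers w p : S \subset support w -> covers w p -> sign S p = sign S (vertex_of w).
Proof.
move=> /subsetP Sw /forallP cwp; apply: eq_bigr => i iS.
move: (Sw i iS) (cwp i); rewrite inE ffunE.
by case: (w i) => [b|] //= _ /eqP[<-]; case: b.
Qed.

Lemma sum_sign_covers w :
  \sum_(p | covers w p) sign S p =
  if S \subset support w then sign S (vertex_of w) *+ (2 ^ jokers w)%N else 0.
Proof.
case: ifP => [Sw | /negbT/subsetPn[k kS]].
  rewrite -card_covers -sumr_const; apply: eq_big => [p | p]; first by rewrite inE.
  exact: sign_covers.
rewrite inE negbK => /eqP wk; apply: (sum_sign_flip_invariant kS) => p.
apply: eq_forallb => i; rewrite ffunE.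
by case: (eqVneq i k) => [-> | _]; rewrite ?wk.
Qed.

End Signs.

Definition twins d (x y : word d) (i : 'I_d) : Prop :=
  clash x y i /\ forall k, k != i -> x k = y k.

Lemma sign_mul_vertex_of d (x y : word d) : support x = support y ->
  (sign (support x) (vertex_of x) * sign (support x) (vertex_of y) = (-1) ^+ wdist x y)%R.
Proof.
move=> /setP supp_xy; rewrite sign_mul wdistE.
suff -> : [set i in support x | vertex_of x i != vertex_of y i] = [set i | clash x y i] by [].
apply/setP => i; move: (supp_xy i); rewrite !inE !ffunE /clash.
by case: (x i) => [[]|]; case: (y i) => [[]|].
Qed.

Lemma twins_of_wdist1 d (x y : word d) : support x = support y -> wdist x y = 1 ->
  exists i, twins x y i.
Proof.
move=> /setP supp_xy; rewrite wdistE => /eqP/cards1P[i clash_i].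
have clash_k k : clash x y k = (k == i) by rewrite -in_set1 -clash_i inE.
exists i; split => [|k ki]; first by rewrite clash_k.
move: (supp_xy k) (clash_k k); rewrite (negbTE ki) !inE /clash.
by case: (x k) => [[]|]; case: (y k) => [[]|].
Qed.

Section Twins.

Variables (d : nat) (F : {set word d}).
Hypotheses (Fnb : neighborly 2 F) (Fcov : covering F).

Let Fsep : separated F := neighborly_separated Fnb.

Lemma sign_change x S : x \in F -> S != set0 -> S \subset support x ->
  exists2 y, y \in F &
    (S \subset support y) && (sign S (vertex_of y) != sign S (vertex_of x)).
Proof.
move=> xF /set0Pn[k kS] Sx; apply/exists_inP/contraT.
rewrite negb_exists_in => /forall_inP same_sign.
have : (\sum_(p | covered F p) sign S p = 0)%R.
  by apply: (sum_sign_flip_invariant kS) => p; rewrite !Fcov.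
rewrite sum_covered // (eq_bigr (fun w => sign S (vertex_of x) *+
    (if S \subset support w then 2 ^ jokers w else 0)%N))%R => [|w wF]; last first.
  rewrite sum_sign_covers; case: ifP => // Sw.
  by have := same_sign w wF; rewrite Sw negbK => /eqP->.
rewrite sumrMnr => /eqP; rewrite mulrn_eq0 (negbTE (sign_neq0 _ _)) orbF.
by rewrite (bigD1 x) //= Sx addn_eq0 expn_eq0.
Qed.

Lemma exists_twins : 1 < #|F| -> exists x y i, [/\ x \in F, y \in F & twins x y i].
Proof.
move=> F2; have [x0 x0F] : exists x0, x0 \in F by apply/card_gt0P; exact: ltnW.
have [x xF xmax] := @arg_maxnP _ x0 (fun w => w \in F) (fun w => #|support w|) x0F.
have supp_x : support x != set0.
  have [y] : exists y, y \in F :\ x by apply/card_gt0P; move: F2; rewrite (cardsD1 x F) xF.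
  rewrite !inE => /andP[yx yF]; rewrite eq_sym in yx.
  have /wdist_gt0P[i /clash_support xi] := Fsep xF yF yx.
  by apply/set0Pn; exists i.
have [y yF /andP[Sy sign_xy]] := sign_change xF supp_x (subxx _).
have supp_eq : support x = support y.
  by apply/eqP; rewrite eqEcard Sy; exact: xmax.
have wdist_xy : wdist x y = 1.
  have xy : x != y by apply: contra_neq sign_xy => ->.
  have /andP[] := Fnb xF yF xy.
  suff : wdist x y != 2 by lia.
  apply: contra_neq sign_xy => wdist2.
  rewrite -[LHS]mul1r -(sign_sq (support x) (vertex_of x)) -mulrA.
  by rewrite sign_mul_vertex_of // wdist2 expr2 mulrNN !mulr1.
have [i xy] := twins_of_wdist1 supp_eq wdist_xy.
by exists x, y, i.
Qed.

End Twins.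

Definition jokerize d (x : word d) (i : 'I_d) : word d :=
  [ffun k => if k == i then joker else x k].

Section Jokerize.

Variables (d : nat) (i : 'I_d).
Implicit Types (x y w : word d).

Lemma jokerize_at x : jokerize x i i = joker.
Proof. by rewrite ffunE eqxx. Qed.

Lemma jokerize_off x k : k != i -> jokerize x i k = x k.
Proof. by rewrite ffunE => /negbTE->. Qed.

Lemma covers_jokerize x p : covers x p -> covers (jokerize x i) p.
Proof.
move=> /forallP cxp; apply/forallP => k; rewrite ffunE.
by case: (k == i); rewrite ?eqxx ?cxp.
Qed.

Lemma clash_jokerize x w k : clash (jokerize x i) w k = (k != i) && clash x w k.
Proof. by rewrite /clash ffunE; case: (k == i). Qed.

Lemma wdist_jokerize x w : wdist (jokerize x i) w <= wdist x w.
Proof.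
rewrite !wdistE; apply/subset_leq_card/subsetP => k.
by rewrite !inE clash_jokerize => /andP[].
Qed.

Lemma jokerize_twins x y : twins x y i -> jokerize y i = jokerize x i.
Proof.
case=> _ xy; apply/ffunP => k; rewrite !ffunE.
by case: (eqVneq k i) => // /xy.
Qed.

End Jokerize.

Section Merge.

Variables (d : nat) (F : {set word d}) (x y : word d) (i : 'I_d).
Hypotheses (Fnb : neighborly 2 F) (Fcov : covering F).
Hypotheses (xF : x \in F) (yF : y \in F) (xy : twins x y i).
Implicit Types (w : word d) (p : vertex d).

Let z := jokerize x i.
Let Fsep : separated F := neighborly_separated Fnb.

Lemma twins_neq : x != y.
Proof. by case: xy => clash_xy _; apply: contraTneq clash_xy => ->; exact: clashxx. Qed.

Lemma twins_nonjoker w : w \in [set x; y] -> w i != joker.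
Proof.
case: xy => + _; rewrite /clash => clash_xy /set2P[]->; move: clash_xy;
  by case: (x i) => [[]|]; case: (y i) => [[]|].
Qed.

Lemma jokerize_twin_pair w : w \in [set x; y] -> jokerize w i = z.
Proof. by case/set2P => ->; rewrite ?(jokerize_twins xy). Qed.

Lemma merged_notin : z \notin F.
Proof.
apply/negP => zF.
have zx : z != x.
  by apply: contraNneq (twins_nonjoker (set21 x y)) => <-; rewrite jokerize_at.
have /wdist_gt0P[k] := Fsep zF xF zx.
by rewrite clash_jokerize (negbTE (clashxx _ _)) andbF.
Qed.

Lemma wdist_merged_gt0 w : w \in F :\ x :\ y -> 0 < wdist z w.
Proof.
rewrite !inE eq_sym [w == x]eq_sym => /and3P[yw xw wF]; apply/wdist_gt0P.
have /wdist_gt0P[k xwk] := Fsep xF wF xw.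
have [ki | ki] := eqVneq k i; last by exists k; rewrite clash_jokerize ki.
have /wdist_gt0P[l ywl] := Fsep yF wF yw.
have [li | li] := eqVneq l i.
  by subst k l; case: xy; rewrite (negbTE (clash_common xwk ywl)).
by exists l; rewrite /z -(jokerize_twins xy) clash_jokerize li.
Qed.

Let F' := z |: (F :\ x :\ y).

Lemma mem_merged w : w \in F -> w \notin [set x; y] -> w \in F'.
Proof. by rewrite !inE negb_or => wF /andP[wx wy]; rewrite wx wy wF orbT. Qed.

Lemma card_merged : #|F'|.+1 = #|F|.
Proof.
rewrite cardsU1 !inE (negbTE merged_notin) !andbF (cardsD1 x F) (cardsD1 y (F :\ x)).
by rewrite !inE xF yF eq_sym twins_neq.
Qed.

Lemma neighborly_merged : neighborly 2 F'.
Proof.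
have zw w : w \in F :\ x :\ y -> 1 <= wdist z w <= 2.
  move=> wF'; rewrite wdist_merged_gt0 //=; apply: leq_trans (wdist_jokerize _ _ _) _.
  move: wF'; rewrite !inE [w == x]eq_sym => /and3P[_ xw wF].
  by case/andP: (Fnb xF wF xw).
move=> u v /setU1P[-> | uF] /setU1P[-> | vF] uv; first by rewrite eqxx in uv.
- exact: zw.
- by rewrite wdistC; exact: zw.
by move: uF vF; rewrite !inE => /and3P[_ _ uF] /and3P[_ _ vF]; exact: Fnb.
Qed.

Lemma covering_merged : covering F'.
Proof.
move=> p; have /exists_inP[w wF cwp] := Fcov p; apply/exists_inP.
case: (boolP (w \in [set x; y])) => wxy.
  by exists z; rewrite ?setU11 // -(jokerize_twin_pair wxy) covers_jokerize.
by exists w; rewrite ?mem_merged.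
Qed.

End Merge.

Lemma exists_jokerless_coordinate d (F : {set word d}) :
  1 < #|F| -> neighborly 2 F -> covering F ->
  exists m, forall w, w \in F -> w m != joker.
Proof.
have [n] := ubnP #|F|; elim: n F => // n IH F Fn F2 Fnb Fcov.
have [x [y [i [xF yF xy]]]] := exists_twins Fnb Fcov F2.
have [F_le2 | F_gt2] := leqP #|F| 2.
  have F_xy : [set x; y] = F.
    by apply/eqP; rewrite eqEcard subUset !sub1set xF yF cards2 (twins_neq xy).
  by exists i => w; rewrite -F_xy; apply: twins_nonjoker.
set z := jokerize x i; set F' := z |: (F :\ x :\ y).
have [m F'm] : exists m, forall w, w \in F' -> w m != joker.
  apply: IH.
  - by move: Fn; rewrite -(card_merged Fnb xF yF xy) ltnS.
  - by move: F_gt2; rewrite -(card_merged Fnb xF yF xy) ltnS.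
  - exact: neighborly_merged.
  - exact: covering_merged.
have mi : m != i by apply: contraNneq (F'm z (setU11 _ _)) => ->; rewrite jokerize_at.
exists m => w wF; case: (boolP (w \in [set x; y])) => wxy.
  by rewrite -(jokerize_off w mi) (jokerize_twin_pair xy wxy) F'm ?setU11.
by rewrite F'm ?mem_merged.
Qed.

Section Deletion.

Variables (d : nat) (m : 'I_d.+1).
Implicit Types (v w : word d.+1) (F : {set word d.+1}).

Lemma clash_del_letter v v' k :
  clash (del_letter m v) (del_letter m v') k = clash v v' (lift m k).
Proof. by rewrite /clash !ffunE. Qed.

Lemma wdist_del_letter v v' : ~~ clash v v' m ->
  wdist (del_letter m v) (del_letter m v') = wdist v v'.
Proof.
move=> nclash; rewrite !wdistE -(card_imset _ (@lift_inj _ m)).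
apply: eq_card => k; rewrite inE; case: (unliftP m k) => [j -> | ->].
  by rewrite mem_imset ?inE ?clash_del_letter //; exact: lift_inj.
rewrite (negbTE nclash); apply/imsetP => -[j _ mj].
by have := neq_lift m j; rewrite -mj eqxx.
Qed.

Lemma neighborly_del_fam k F s : neighborly k F -> neighborly k (del_fam m (fam_at F m s)).
Proof.
move=> Fnb _ _ /imsetP[v + ->] /imsetP[v' + ->]; rewrite !inE.
move=> /andP[vF /eqP vm] /andP[v'F /eqP v'm] del_neq.
have vv' : v != v' by apply: contraNneq del_neq => ->.
rewrite wdist_del_letter ?Fnb // /clash vm v'm.
by case: s {vm v'm} => [[]|].
Qed.

Lemma covering_del_fam F b : covering F -> (forall w, w \in F -> w m != joker) ->
  covering (del_fam m (fam_at F m (Some b))).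
Proof.
move=> Fcov Fm q; pose p : vertex d.+1 := [ffun k => if unlift m k is Some j then q j else b].
have /exists_inP[w wF /forallP cwp] := Fcov p.
have wm : w m = Some b.
  move: (Fm w wF) (cwp m); rewrite ffunE unlift_none.
  by case: (w m) => [c _ /eqP|]; rewrite ?eqxx.
apply/exists_inP; exists (del_letter m w).
  by apply: imset_f; rewrite inE wF wm eqxx.
by apply/forallP => j; move: (cwp (lift m j)); rewrite /p !ffunE liftK.
Qed.

Lemma lamination_at_jokerless k F : neighborly k F -> covering F ->
  (forall w, w \in F -> w m != joker) -> lamination_at F m.
Proof.
move=> Fnb Fcov Fm; split.
  split; first by exists k.
  exact/(partition_covering (neighborly_separated Fnb)).
apply/setP => w; rewrite !inE; case wF: (w \in F) => //=.
by move: (Fm w wF); case: (w m) => [[]|].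
Qed.

End Deletion.

Lemma total_lamination_of_covering d (F : {set word d.+1}) :
  neighborly 2 F -> covering F -> total_lamination F.
Proof.
elim: d F => [|d IH] F Fnb Fcov; have [F1 | F2] := leqP #|F| 1;
  try by rewrite (covering_singleton Fcov F1); exact: TL_joker.
all: have [m Fm] := exists_jokerless_coordinate F2 Fnb Fcov.
- rewrite (covering_full_cube Fcov) => [|w wF i]; first exact: TL_cube.
  by rewrite (ord1 i) -(ord1 m) Fm.
- apply: (TL_split (i := m)); first exact: lamination_at_jokerless Fnb Fcov Fm.
  all: apply: IH; [exact: neighborly_del_fam | exact: covering_del_fam].
Qed.

Theorem corollary3 (d : nat) (k : nat) (F : {set word d}) :
  1 <= d -> k <= 2 -> neighborly k F -> is_partition F ->
  total_lamination F.
Proof.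
case: d F => [// | d] F _ k2 Fnb [_ Fsum].
have Fnb2 := neighborly_leq k2 Fnb.
apply: (total_lamination_of_covering Fnb2).
exact/(partition_covering (neighborly_separated Fnb2)).
Qed.
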